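(* Let $\beta>0$ and let $L:(0,\infty)\to(0,\infty)$ be slowly varying at $\infty$ with $n\mapsto L(e^n)$ ultimately monotonically increasing. For all sufficiently large $y$, let $n\ge2$ be the integer with $n-1+\frac{1}{2\beta}\log L(e^{2n-2})\le y<n+\frac{1}{2\beta}\log L(e^{2n})$, and define \[ g_1(y)=\begin{cases} n-1, & \text{if } n-1+\frac{1}{2\beta}\log L(e^{2n-2})\le y<n-1+\frac1{2\beta}\log L(e^{2n}),\\ y-\frac{1}{2\beta}\log L(e^{2n}), & \text{if } n-1+\frac1{2\beta}\log L(e^{2n})\le y<n+\frac1{2\beta}\log L(e^{2n}),\end{cases} \] and $\tilde g_1(y)=y-\frac{1}{2\beta}\log L(e^{2n-2})$. Then $\tilde g_1(y)-g_1(y)\to0$ as $y\to\infty$. *)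

From Stdlib Require Import Reals Lra.
Open Scope R_scope.

Definition slowly_varying (L : R -> R) : Prop :=
  (forall x, 0 < x -> 0 < L x) /\
  (forall lam, 0 < lam -> forall eps, 0 < eps ->
     exists M, forall x, M < x -> Rabs (L (lam * x) / L x - 1) < eps).

Definition ult_incr_exp (L : R -> R) : Prop :=
  exists N : nat, forall m k : nat, (N <= m)%nat -> (m <= k)%nat ->
    L (exp (INR m)) <= L (exp (INR k)).

Definition hL (beta : R) (L : R -> R) (t : R) : R := / (2 * beta) * ln (L (exp t)).

Definition n_cond (beta : R) (L : R -> R) (y : R) (n : nat) : Prop :=
  (2 <= n)%nat /\
  INR n - 1 + hL beta L (2 * INR n - 2) <= y /\
  y < INR n + hL beta L (2 * INR n).

Definition g1 (beta : R) (L : R -> R) (y : R) (n : nat) : R :=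
  if Rlt_dec y (INR n - 1 + hL beta L (2 * INR n))
  then INR n - 1
  else y - hL beta L (2 * INR n).

Definition g1t (beta : R) (L : R -> R) (y : R) (n : nat) : R :=
  y - hL beta L (2 * INR n - 2).

From Stdlib Require Import Reals Lra Lia.
Open Scope R_scope.

(* Put [a n := n_lower n = n - 1 + h(2n - 2)] with [h t = (1/(2 beta)) log L(e^t)], so that
   the condition on [n] reads [a n <= y < a (n + 1)].  Slow variation (with
   [lam = e^2]) and the monotonicity of [n |-> L(e^n)] make the increments
   [h(2n) - h(2n - 2)] eventually lie in [[0, eps)].  Hence [a] eventually
   climbs by at least 1 per step, so these intervals tile a half-line and [n]
   exists and is unique for large [y]; and in both cases of the definition of
   [g_1], the difference [g~_1(y) - g_1(y)] is bounded by that increment. *)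

Lemma ln_le x y : 0 < x -> x <= y -> ln x <= ln y.
Proof.
  intros hx hxy; destruct (Rle_lt_or_eq_dec _ _ hxy) as [h | <-].
  - left; apply ln_increasing; assumption.
  - apply Rle_refl.
Qed.

Lemma finite_upper_bound (f : nat -> R) (N : nat) :
  exists B, forall k, (k <= N)%nat -> f k <= B.
Proof.
  induction N as [|N [B HB]].
  - exists (f 0%nat); intros k hk; replace k with 0%nat by lia; apply Rle_refl.
  - exists (Rmax B (f (S N))); intros k hk.
    destruct (Nat.eq_dec k (S N)) as [-> | hne]; [apply Rmax_r |].
    apply Rle_trans with B; [apply HB; lia | apply Rmax_l].
Qed.

Section Staircase.

Variables (a : nat -> R) (N : nat).
Hypothesis a_step : forall n, (N <= n)%nat -> a n + 1 <= a (S n).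

Lemma staircase_shift k : a N + INR k <= a (N + k).
Proof.
  induction k as [|k IH].
  - rewrite Nat.add_0_r; simpl; lra.
  - rewrite Nat.add_succ_r, S_INR.
    pose proof (a_step (N + k) ltac:(lia)); lra.
Qed.

Lemma staircase_le n m : (N <= n)%nat -> (n <= m)%nat -> a n <= a m.
Proof.
  intros hn hm; induction hm as [|m hm IH]; [apply Rle_refl |].
  pose proof (a_step m ltac:(lia)); lra.
Qed.

Lemma staircase_exists y : a N <= y ->
  exists n, (N <= n)%nat /\ a n <= y < a (S n).
Proof.
  intros hy.
  assert (Hfound : forall k, (exists n, (N <= n)%nat /\ a n <= y < a (S n))
                             \/ a (N + k) <= y).
  { induction k as [|k [IH | IH]]; [right; rewrite Nat.add_0_r; exact hy | left; exact IH |].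
    destruct (Rlt_le_dec y (a (S (N + k)))) as [h | h].
    - left; exists (N + k)%nat; split; [lia | lra].
    - right; rewrite Nat.add_succ_r; exact h. }
  destruct (INR_unbounded (y - a N)) as [k hk].
  destruct (Hfound k) as [Hn | Hk]; [exact Hn |].
  pose proof (staircase_shift k); lra.
Qed.

Lemma staircase_unique y n m : (N <= n)%nat -> (N <= m)%nat ->
  a n <= y < a (S n) -> a m <= y < a (S m) -> n = m.
Proof.
  intros hn hm [hn1 hn2] [hm1 hm2].
  destruct (Nat.lt_total n m) as [h | [h | h]]; [| exact h |]; exfalso.
  - pose proof (staircase_le (S n) m ltac:(lia) h); lra.
  - pose proof (staircase_le (S m) n ltac:(lia) h); lra.
Qed.

End Staircase.

Lemma slowly_varying_ln_increment (L : R -> R) lam d :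
  slowly_varying L -> 0 < lam -> 0 < d ->
  exists M, forall x, M < x -> ln (L (lam * x)) - ln (L x) < d.
Proof.
  intros [Lpos Lsv] hlam hd.
  assert (he : 0 < exp d - 1) by (pose proof (exp_ineq1 d ltac:(lra)); lra).
  destruct (Lsv lam hlam _ he) as [M HM].
  exists (Rmax M 0); intros x hx.
  assert (hx0 : 0 < x) by (pose proof (Rmax_r M 0); lra).
  pose proof (Lpos x hx0) as hLx.
  pose proof (Lpos (lam * x) ltac:(nra)) as hLlx.
  assert (hratio : L (lam * x) / L x < exp d).
  { pose proof (HM x ltac:(pose proof (Rmax_l M 0); lra)) as h.
    apply Rabs_def2 in h; lra. }
  assert (hlt : L (lam * x) < exp d * L x).
  { apply (Rmult_lt_compat_r (L x)) in hratio; [| exact hLx].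
    unfold Rdiv in hratio; rewrite Rmult_assoc, Rinv_l in hratio; lra. }
  apply ln_increasing in hlt; [| exact hLlx].
  rewrite ln_mult, ln_exp in hlt; [lra | apply exp_pos | exact hLx].
Qed.

Section Increments.

Variables (beta : R) (L : R -> R).
Hypotheses (beta_pos : 0 < beta) (L_sv : slowly_varying L)
           (L_incr : ult_incr_exp L).

Lemma hL_increment d : 0 < d -> exists N, forall n, (N <= n)%nat ->
  0 <= hL beta L (2 * INR n) - hL beta L (2 * INR n - 2) < d.
Proof.
  intros hd.
  assert (hinv : 0 < / (2 * beta)) by (apply Rinv_0_lt_compat; lra).
  destruct (slowly_varying_ln_increment L (exp 2) (2 * beta * d) L_sv
              (exp_pos 2) ltac:(nra)) as [M HM].
  destruct L_incr as [K HK].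
  destruct (INR_unbounded M) as [J HJ].
  exists (S (Nat.max K J)); intros [|m] hm; [lia |].
  set (x := exp (2 * INR m)).
  assert (hprev : 2 * INR (S m) - 2 = 2 * INR m) by (rewrite S_INR; ring).
  assert (hnext : exp (2 * INR (S m)) = exp 2 * x).
  { unfold x; rewrite <- exp_plus, S_INR; f_equal; ring. }
  unfold hL; rewrite hprev, hnext; fold x; rewrite <- Rmult_minus_distr_l.
  split.
  - apply Rmult_le_pos; [lra |].
    pose proof (HK (2 * m)%nat (2 * S m)%nat ltac:(lia) ltac:(lia)) as h.
    rewrite !mult_INR in h; simpl (INR 2) in h.
    replace ((1 + 1) * INR (S m)) with (2 * INR (S m)) in h by ring.
    replace ((1 + 1) * INR m) with (2 * INR m) in h by ring.
    rewrite hnext in h; fold x in h.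
    assert (hLx : 0 < L x) by (apply (proj1 L_sv), exp_pos).
    pose proof (ln_le _ _ hLx h); lra.
  - assert (hMx : M < x).
    { pose proof (le_INR J m ltac:(lia)); pose proof (pos_INR m).
      pose proof (exp_ineq1_le (2 * INR m)); unfold x; lra. }
    pose proof (HM x hMx) as h.
    apply Rmult_lt_compat_l with (r := / (2 * beta)) in h; [| exact hinv].
    replace (/ (2 * beta) * (2 * beta * d)) with d in h by (field; lra).
    exact h.
Qed.

End Increments.

Definition n_lower (beta : R) (L : R -> R) (n : nat) : R :=
  INR n - 1 + hL beta L (2 * INR n - 2).

Lemma n_lower_succ beta L n :
  n_lower beta L (S n) = INR n + hL beta L (2 * INR n).
Proof.
  unfold n_lower; rewrite S_INR.
  replace (2 * (INR n + 1) - 2) with (2 * INR n) by ring; ring.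
Qed.

Lemma n_cond_iff beta L y n : n_cond beta L y n <->
  (2 <= n)%nat /\ n_lower beta L n <= y < n_lower beta L (S n).
Proof. unfold n_cond; rewrite n_lower_succ; unfold n_lower; tauto. Qed.

Lemma Rabs_g1t_sub_g1_le beta L y n : n_cond beta L y n ->
  Rabs (g1t beta L y n - g1 beta L y n)
    <= Rabs (hL beta L (2 * INR n) - hL beta L (2 * INR n - 2)).
Proof.
  intros [_ [hlo hhi]]; unfold g1t, g1.
  destruct (Rlt_dec y (INR n - 1 + hL beta L (2 * INR n))).
  - rewrite !Rabs_pos_eq; lra.
  - right; f_equal; ring.
Qed.

Theorem lemmaA1 (beta : R) (L : R -> R) :
  0 < beta -> slowly_varying L -> ult_incr_exp L ->
  forall eps, 0 < eps ->
  exists Y, forall y, Y < y ->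
    (exists! n : nat, n_cond beta L y n) /\
    (forall n : nat, n_cond beta L y n ->
       Rabs (g1t beta L y n - g1 beta L y n) < eps).
Proof.
  intros hb hsv hinc eps heps.
  destruct (hL_increment beta L hb hsv hinc eps heps) as [N1 Hincr].
  set (N := Nat.max N1 2); set (a := n_lower beta L).
  assert (a_step : forall n, (N <= n)%nat -> a n + 1 <= a (S n)).
  { intros n hn; pose proof (Hincr n ltac:(lia)); unfold a.
    rewrite n_lower_succ; unfold n_lower; lra. }
  destruct (finite_upper_bound a N) as [B HB].
  exists (Rmax B (a N)); intros y hy.
  pose proof (Rmax_l B (a N)); pose proof (Rmax_r B (a N)).
  assert (Hlarge : forall n, n_cond beta L y n -> (N <= n)%nat).
  { intros n [_ [_ hn]]%n_cond_iff; apply Nat.nlt_ge; intros hsmall.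
    pose proof (HB (S n) hsmall); fold a in hn; lra. }
  split.
  - destruct (staircase_exists a N a_step y ltac:(lra)) as [n [hn hy']].
    assert (Hn : n_cond beta L y n) by (apply n_cond_iff; split; [lia | exact hy']).
    exists n; split; [exact Hn |].
    intros m Hm; pose proof (Hlarge m Hm).
    apply n_cond_iff in Hm; destruct Hm as [_ Hm].
    exact (staircase_unique a N a_step y n m hn ltac:(assumption) hy' Hm).
  - intros n Hn.
    pose proof (Hincr n ltac:(pose proof (Hlarge n Hn); lia)) as Hd.
    eapply Rle_lt_trans; [apply Rabs_g1t_sub_g1_le, Hn |].
    rewrite Rabs_pos_eq; lra.
Qed.
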